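(* Let $X$ be an index set and $S_x$ ($x\in X$) a family of splinters. Then the direct product $S=\prod_{x\in X} S_x$ is a splinter.
   Context: A ring $S$ (not necessarily Noetherian) is a splinter if every finite and finitely presented ring map $S\to T$ that induces a surjective map $\operatorname{Spec}(T)\to\operatorname{Spec}(S)$ splits as a map of $S$-modules. *)

From HB Require Import structures.
From mathcomp Require Import all_boot all_algebra.
From mathcomp Require Import boolp.
Set Implicit Arguments. Unset Strict Implicit. Unset Printing Implicit Defensive.
Import GRing.Theory.
Local Open Scope ring_scope.

Definition is_prime_ideal (R : comPzRingType) (P : R -> Prop) : Prop :=
  [/\ P 0,
      (forall a b, P a -> P b -> P (a + b)),
      (forall a b, P b -> P (a * b)),
      ~ P 1 &
      (forall a b, P (a * b) -> P a \/ P b)].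

Definition spec_surjective (S T : comPzRingType) (f : {rmorphism S -> T}) : Prop :=
  forall p : S -> Prop, is_prime_ideal p ->
    exists q : T -> Prop, is_prime_ideal q /\ (forall s : S, p s <-> q (f s)).

Definition finite_map (S T : comPzRingType) (f : {rmorphism S -> T}) : Prop :=
  exists (n : nat) (g : 'I_n -> T),
    forall y : T, exists c : 'I_n -> S, y = \sum_(i < n) f (c i) * g i.

Inductive pexpr (S : Type) (n : nat) : Type :=
| PC : S -> pexpr S n
| PX : 'I_n -> pexpr S n
| PAdd : pexpr S n -> pexpr S n -> pexpr S n
| PMul : pexpr S n -> pexpr S n -> pexpr S n
| POpp : pexpr S n -> pexpr S n.
Arguments PC {S n}.
Arguments PX {S n}.
Arguments PAdd {S n}.
Arguments PMul {S n}.
Arguments POpp {S n}.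

Fixpoint peval (S T : comPzRingType) (f : S -> T) (n : nat) (t : 'I_n -> T)
  (p : pexpr S n) : T :=
  match p with
  | PC s => f s
  | PX i => t i
  | PAdd p q => peval f t p + peval f t q
  | PMul p q => peval f t p * peval f t q
  | POpp p => - peval f t p
  end.

(** [pcong rels] is the congruence on expressions whose quotient is
    S[X_0..X_{n-1}] / (rels): the smallest congruence containing the
    commutative S-algebra axioms and identifying each relation with 0. *)
Inductive pcong (S : comPzRingType) (n m : nat) (rels : 'I_m -> pexpr S n)
  : pexpr S n -> pexpr S n -> Prop :=
| pc_refl p : pcong rels p p
| pc_sym p q : pcong rels p q -> pcong rels q p
| pc_trans p q r : pcong rels p q -> pcong rels q r -> pcong rels p r
| pc_add p p' q q' : pcong rels p p' -> pcong rels q q' ->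
    pcong rels (PAdd p q) (PAdd p' q')
| pc_mul p p' q q' : pcong rels p p' -> pcong rels q q' ->
    pcong rels (PMul p q) (PMul p' q')
| pc_opp p p' : pcong rels p p' -> pcong rels (POpp p) (POpp p')
| pc_addA p q r : pcong rels (PAdd p (PAdd q r)) (PAdd (PAdd p q) r)
| pc_addC p q : pcong rels (PAdd p q) (PAdd q p)
| pc_add0 p : pcong rels (PAdd (PC 0) p) p
| pc_addN p : pcong rels (PAdd (POpp p) p) (PC 0)
| pc_mulA p q r : pcong rels (PMul p (PMul q r)) (PMul (PMul p q) r)
| pc_mulC p q : pcong rels (PMul p q) (PMul q p)
| pc_mul1 p : pcong rels (PMul (PC 1) p) p
| pc_mulD p q r : pcong rels (PMul p (PAdd q r)) (PAdd (PMul p q) (PMul p r))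
| pc_Cadd a b : pcong rels (PC (a + b)) (PAdd (PC a) (PC b))
| pc_Cmul a b : pcong rels (PC (a * b)) (PMul (PC a) (PC b))
| pc_rel j : pcong rels (rels j) (PC 0).

(** finitely presented: T is isomorphic, as an S-algebra via f, to
    S[X_0..X_{n-1}]/(r_1,..,r_m) for some n and finitely many r_j:
    the S-algebra map X_i |-> t i is surjective, kills the relations,
    and its kernel is exactly the ideal generated by the relations. *)
Definition finitely_presented_map (S T : comPzRingType) (f : {rmorphism S -> T})
  : Prop :=
  exists (n m : nat) (t : 'I_n -> T) (rels : 'I_m -> pexpr S n),
    [/\ (forall y : T, exists p, peval f t p = y),
        (forall j, peval f t (rels j) = 0) &
        (forall p q, peval f t p = peval f t q -> pcong rels p q)].

Definition splits_as_module (S T : comPzRingType) (f : {rmorphism S -> T}) : Prop :=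
  exists sigma : T -> S,
    [/\ (forall y z : T, sigma (y + z) = sigma y + sigma z),
        (forall (s : S) (y : T), sigma (f s * y) = s * sigma y) &
        (forall s : S, sigma (f s) = s)].

Definition splinter (S : comPzRingType) : Prop :=
  forall (T : comPzRingType) (f : {rmorphism S -> T}),
    finite_map f -> finitely_presented_map f -> spec_surjective f ->
    splits_as_module f.

Definition dprod (X : Type) (S : X -> comPzRingType) : Type := forall x, S x.

Section DProd.
Variables (X : Type) (S : X -> comPzRingType).
Local Notation P := (dprod S).

HB.instance Definition _ := Choice.copy P (forall x, S x).

Definition dp_zero : P := fun x => 0.
Definition dp_one : P := fun x => 1.
Definition dp_opp (a : P) : P := fun x => - a x.
Definition dp_add (a b : P) : P := fun x => a x + b x.
Definition dp_mul (a b : P) : P := fun x => a x * b x.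

Lemma dp_addA : associative dp_add.
Proof. by move=> a b c; apply: functional_extensionality_dep => x; rewrite /dp_add addrA. Qed.
Lemma dp_addC : commutative dp_add.
Proof. by move=> a b; apply: functional_extensionality_dep => x; rewrite /dp_add addrC. Qed.
Lemma dp_add0 : left_id dp_zero dp_add.
Proof. by move=> a; apply: functional_extensionality_dep => x; rewrite /dp_add add0r. Qed.
Lemma dp_addN : left_inverse dp_zero dp_opp dp_add.
Proof. by move=> a; apply: functional_extensionality_dep => x; rewrite /dp_add /dp_opp addNr. Qed.
Lemma dp_mulA : associative dp_mul.
Proof. by move=> a b c; apply: functional_extensionality_dep => x; rewrite /dp_mul mulrA. Qed.
Lemma dp_mul1 : left_id dp_one dp_mul.
Proof. by move=> a; apply: functional_extensionality_dep => x; rewrite /dp_mul mul1r. Qed.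
Lemma dp_mulr1 : right_id dp_one dp_mul.
Proof. by move=> a; apply: functional_extensionality_dep => x; rewrite /dp_mul mulr1. Qed.
Lemma dp_mulDl : left_distributive dp_mul dp_add.
Proof. by move=> a b c; apply: functional_extensionality_dep => x; rewrite /dp_mul /dp_add mulrDl. Qed.
Lemma dp_mulDr : right_distributive dp_mul dp_add.
Proof. by move=> a b c; apply: functional_extensionality_dep => x; rewrite /dp_mul /dp_add mulrDr. Qed.
Lemma dp_mulC : commutative dp_mul.
Proof. by move=> a b; apply: functional_extensionality_dep => x; rewrite /dp_mul mulrC. Qed.

HB.instance Definition _ := GRing.isPzRing.Build P
  dp_addA dp_addC dp_add0 dp_addN dp_mulA dp_mul1 dp_mulr1 dp_mulDl dp_mulDr.
HB.instance Definition _ := GRing.PzRing_hasCommutativeMul.Build P dp_mulC.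
End DProd.

Check fun (X : Type) (S : X -> comPzRingType) => (dprod S : comPzRingType).

From HB Require Import structures.
From mathcomp Require Import all_boot all_algebra.
From mathcomp Require Import boolp.
Set Implicit Arguments. Unset Strict Implicit. Unset Printing Implicit Defensive.
Import GRing.Theory.
Local Open Scope ring_scope.

(* For [x : X] let [e_x] be the idempotent of [S = prod_x S_x] that is [1] at [x]
   and [0] elsewhere, so that [S_x = e_x S] is a direct factor of [S].  Given a
   finite, finitely presented map [f : S -> T] that is surjective on spectra, its
   base change [S_x -> f(e_x) T] has the same three properties, hence has an
   [S_x]-linear retraction [sigma_x] because [S_x] is a splinter.  The family
   [y |-> (sigma_x (f(e_x) y))_x] is then an [S]-linear retraction of [f]. *)

Lemma is_prime_ideal_pullback (A B : comPzRingType) (g : A -> B) (Q : B -> Prop) :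
  g 0 = 0 -> {morph g : a b / a + b} -> {morph g : a b / a * b} ->
  is_prime_ideal Q -> ~ Q (g 1) -> is_prime_ideal (Q \o g).
Proof.
move=> g0 gD gM [Q0 QD QM _ QP] Qg1; split => //=.
- by rewrite g0.
- by move=> a b Qa Qb; rewrite gD; apply: QD.
- by move=> a b Qb; rewrite gM; apply: QM.
- by move=> a b; rewrite gM; apply: QP.
Qed.

Fixpoint pexpr_map (A B : Type) (h : A -> B) {n} (p : pexpr A n) : pexpr B n :=
  match p with
  | PC s => PC (h s)
  | PX i => PX i
  | PAdd p q => PAdd (pexpr_map h p) (pexpr_map h q)
  | PMul p q => PMul (pexpr_map h p) (pexpr_map h q)
  | POpp p => POpp (pexpr_map h p)
  end.

Lemma pexpr_mapK (A B : Type) (h : A -> B) (g : B -> A) n :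
  cancel h g -> cancel (@pexpr_map _ _ h n) (pexpr_map g).
Proof. by move=> hK; elim=> //= [s|p -> q ->|p -> q ->|p ->]; rewrite ?hK. Qed.

Lemma peval_map (A B T : comPzRingType) (f : B -> T) (h : A -> B) n
    (t : 'I_n -> T) (p : pexpr A n) :
  peval f t (pexpr_map h p) = peval (f \o h) t p.
Proof. by elim: p => //= [p -> q ->|p -> q ->|p ->]. Qed.

Lemma rmorph_peval (S T U : comPzRingType) (f : S -> T) (phi : {rmorphism T -> U})
    n (t : 'I_n -> T) (p : pexpr S n) :
  phi (peval f t p) = peval (phi \o f) (phi \o t) p.
Proof.
by elim: p => //= [p <- q <-|p <- q <-|p <-]; rewrite ?rmorphD ?rmorphM ?rmorphN.
Qed.

Lemma pcong_map (A B : comPzRingType) (h : {rmorphism A -> B}) n m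
    (rels : 'I_m -> pexpr A n) (p q : pexpr A n) :
  pcong rels p q -> pcong (pexpr_map h \o rels) (pexpr_map h p) (pexpr_map h q).
Proof.
elim=> /=; try by intros; econstructor; eauto.
- by move=> r; rewrite rmorph0; constructor.
- by move=> r; rewrite rmorph0; constructor.
- by move=> r; rewrite rmorph1; constructor.
- by move=> a b; rewrite rmorphD; constructor.
- by move=> a b; rewrite rmorphM; constructor.
- by move=> j; rewrite rmorph0; apply: (pc_rel (pexpr_map h \o rels)).
Qed.

(* The corner ring [e R] of an idempotent [e], with unit [e].  The idempotency
   proof is an argument only so that the ring structure can be attached. *)
Definition corner (R : comPzRingType) (e : R) of e * e = e := {y : R | e * y == y}.

Section Corner.
Variables (R : comPzRingType) (e : R) (e_idem : e * e = e).
Local Notation eR := (corner e_idem).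

HB.instance Definition _ := Choice.on eR.
Local Notation mk_corner := (exist (fun y : R => e * y == y)).

Lemma corner_mulIl (y : eR) : e * val y = val y.
Proof. exact/eqP/(valP y). Qed.

Lemma corner_subproof0 : e * 0 == 0.
Proof. by rewrite mulr0. Qed.
Lemma corner_subproofN (a : eR) : e * - val a == - val a.
Proof. by rewrite mulrN corner_mulIl. Qed.
Lemma corner_subproofD (a b : eR) : e * (val a + val b) == val a + val b.
Proof. by rewrite mulrDr !corner_mulIl. Qed.
Lemma corner_subproofM (a b : eR) : e * (val a * val b) == val a * val b.
Proof. by rewrite mulrA corner_mulIl. Qed.

Definition corner_zero : eR := mk_corner 0 corner_subproof0.
Definition corner_one : eR := mk_corner e (introT eqP e_idem).
Definition corner_opp (a : eR) : eR := mk_corner _ (corner_subproofN a).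
Definition corner_add (a b : eR) : eR := mk_corner _ (corner_subproofD a b).
Definition corner_mul (a b : eR) : eR := mk_corner _ (corner_subproofM a b).

Lemma corner_addA : associative corner_add.
Proof. by move=> a b c; apply: val_inj; rewrite /= addrA. Qed.
Lemma corner_addC : commutative corner_add.
Proof. by move=> a b; apply: val_inj; rewrite /= addrC. Qed.
Lemma corner_add0 : left_id corner_zero corner_add.
Proof. by move=> a; apply: val_inj; rewrite /= add0r. Qed.
Lemma corner_addN : left_inverse corner_zero corner_opp corner_add.
Proof. by move=> a; apply: val_inj; rewrite /= addNr. Qed.

HB.instance Definition _ := GRing.isZmodule.Build eR
  corner_addA corner_addC corner_add0 corner_addN.

Lemma corner_mulA : associative corner_mul.
Proof. by move=> a b c; apply: val_inj; rewrite /= mulrA. Qed.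
Lemma corner_mulC : commutative corner_mul.
Proof. by move=> a b; apply: val_inj; rewrite /= mulrC. Qed.
Lemma corner_mul1 : left_id corner_one corner_mul.
Proof. by move=> a; apply: val_inj; rewrite /= corner_mulIl. Qed.
Lemma corner_mulDl : left_distributive corner_mul corner_add.
Proof. by move=> a b c; apply: val_inj; rewrite /= mulrDl. Qed.

HB.instance Definition _ := GRing.Zmodule_isComPzRing.Build eR
  corner_mulA corner_mulC corner_mul1 corner_mulDl.

Lemma to_corner_subproof (y : R) : e * (e * y) == e * y.
Proof. by rewrite mulrA e_idem. Qed.
Definition to_corner (y : R) : eR := mk_corner (e * y) (to_corner_subproof y).

Lemma val_to_corner (y : R) : val (to_corner y) = e * y.
Proof. by []. Qed.

Lemma to_cornerK (a : eR) : to_corner (val a) = a.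
Proof. by apply: val_inj; rewrite val_to_corner corner_mulIl. Qed.

Lemma to_corner_is_nmod_morphism : nmod_morphism to_corner.
Proof. by split=> [|y z]; apply: val_inj; rewrite /= (mulr0, mulrDr). Qed.

Lemma to_corner_is_monoid_morphism : monoid_morphism to_corner.
Proof.
split=> [|y z]; apply: val_inj; first by rewrite /= mulr1.
by rewrite /= mulrACA e_idem.
Qed.

HB.instance Definition _ := GRing.isNmodMorphism.Build R eR to_corner
  to_corner_is_nmod_morphism.
HB.instance Definition _ := GRing.isMonoidMorphism.Build R eR to_corner
  to_corner_is_monoid_morphism.
End Corner.

(* [B] is the direct factor [iota 1 * A] of [A], with projection [pi] and
   inclusion [iota]; [factor_map] is the base change of [f] along [pi], realised
   as [B -> f (iota 1) * T]. *)
Section DirectFactor.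
Variables (A B T : comPzRingType) (pi : {rmorphism A -> B}) (iota : B -> A).
Hypotheses (iotaK : cancel iota pi) (iota_pi : forall a, iota (pi a) = iota 1 * a).
Variable f : {rmorphism A -> T}.

Lemma idem_iota1 : iota 1 * iota 1 = iota 1.
Proof. by rewrite -iota_pi iotaK. Qed.

Lemma idem_f_iota1 : f (iota 1) * f (iota 1) = f (iota 1).
Proof. by rewrite -rmorphM idem_iota1. Qed.

Local Notation Te := (corner idem_f_iota1).
Local Notation to_Te := (to_corner idem_f_iota1).

Definition factor_map (b : B) : Te := to_Te (f (iota b)).

Lemma factor_map_pi (a : A) : factor_map (pi a) = to_Te (f a).
Proof.
by apply: val_inj; rewrite !val_to_corner iota_pi rmorphM mulrA idem_f_iota1.
Qed.

Lemma factor_map_is_nmod_morphism : nmod_morphism factor_map.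
Proof.
split=> [|b c]; first by rewrite -(rmorph0 pi) factor_map_pi !rmorph0.
by rewrite -[b]iotaK -[c]iotaK -rmorphD !factor_map_pi !rmorphD.
Qed.

Lemma factor_map_is_monoid_morphism : monoid_morphism factor_map.
Proof.
split=> [|b c]; first by move: (factor_map_pi 1); rewrite !rmorph1.
by rewrite -[b]iotaK -[c]iotaK -rmorphM !factor_map_pi !rmorphM.
Qed.

HB.instance Definition _ := GRing.isNmodMorphism.Build B Te factor_map
  factor_map_is_nmod_morphism.
HB.instance Definition _ := GRing.isMonoidMorphism.Build B Te factor_map
  factor_map_is_monoid_morphism.

Lemma finite_factor_map : finite_map f -> finite_map factor_map.
Proof.
case=> n [g gen]; exists n, (to_Te \o g) => y.
rewrite -[y]to_cornerK; have [c ->] := gen (val y); exists (pi \o c).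
rewrite rmorph_sum; apply: eq_bigr => i _.
by rewrite rmorphM /= factor_map_pi.
Qed.

Lemma peval_factor_map n (t : 'I_n -> T) (p : pexpr A n) :
  peval factor_map (to_Te \o t) (pexpr_map pi p) = to_Te (peval f t p).
Proof.
have factor_map_piE : factor_map \o pi = to_Te \o f := funext factor_map_pi.
by rewrite peval_map factor_map_piE rmorph_peval.
Qed.

Lemma finitely_presented_factor_map :
  finitely_presented_map f -> finitely_presented_map factor_map.
Proof.
case=> n [m [t [rels [gen relsE presented]]]].
exists n, m, (to_Te \o t), (pexpr_map pi \o rels); split.
- move=> y; have [p evalp] := gen (val y); exists (pexpr_map pi p).
  by rewrite peval_factor_map evalp to_cornerK.
- by move=> j; rewrite /= peval_factor_map relsE rmorph0.
- move=> p q evalpq.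
  (* [Te] only sees the [f (iota 1)]-component, hence the factor [iota 1]. *)
  pose lift (r : pexpr B n) := PMul (PC (iota 1)) (pexpr_map iota r).
  have eval_lift r : peval f t (lift r) = val (peval factor_map (to_Te \o t) r).
    by rewrite -[in RHS](pexpr_mapK iotaK r) peval_factor_map.
  have /(pcong_map pi) : pcong rels (lift p) (lift q).
    by apply: presented; rewrite !eval_lift evalpq.
  rewrite /= iotaK !(pexpr_mapK iotaK) => cong1pq.
  exact: pc_trans (pc_sym (pc_mul1 _ _)) (pc_trans cong1pq (pc_mul1 _ _)).
Qed.

Lemma spec_surjective_factor_map : spec_surjective f -> spec_surjective factor_map.
Proof.
move=> surj p p_prime.
have p1 : ~ p 1 by case: p_prime.
have [|Q [Q_prime pQ]] := surj (p \o pi).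
  apply: is_prime_ideal_pullback => //; first exact: rmorph0.
  - exact: rmorphD.
  - exact: rmorphM.
  - by rewrite rmorph1.
exists (Q \o val); split.
- by apply: is_prime_ideal_pullback => //; rewrite /= -pQ /= iotaK.
- by move=> b; rewrite /= -rmorphM -pQ /= -iota_pi !iotaK.
Qed.

End DirectFactor.

Definition dprod_inj (X : Type) (S : X -> comPzRingType) (x : X) (s : S x) : dprod S :=
  fun y => if pselect (x = y) is left exy then eq_rect x S s y exy else 0.
Arguments dprod_inj {X S} x s.

Section DirectProduct.
Variables (X : Type) (S : X -> comPzRingType).

Lemma dprod_addE (a b : dprod S) (y : X) : (a + b) y = a y + b y.
Proof. by []. Qed.

Lemma dprod_mulE (a b : dprod S) (y : X) : (a * b) y = a y * b y.
Proof. by []. Qed.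

Definition dprod_proj (x : X) (s : dprod S) : S x := s x.

Lemma dprod_proj_is_nmod_morphism x : nmod_morphism (dprod_proj x).
Proof. by []. Qed.

Lemma dprod_proj_is_monoid_morphism x : monoid_morphism (dprod_proj x).
Proof. by []. Qed.

HB.instance Definition _ x := GRing.isNmodMorphism.Build (dprod S) (S x)
  (dprod_proj x) (dprod_proj_is_nmod_morphism x).
HB.instance Definition _ x := GRing.isMonoidMorphism.Build (dprod S) (S x)
  (dprod_proj x) (dprod_proj_is_monoid_morphism x).

Lemma dprod_injK (x : X) : cancel (dprod_inj x) (dprod_proj x).
Proof.
move=> s; rewrite /dprod_proj /dprod_inj; case: pselect => // exx.
by rewrite (Prop_irrelevance exx erefl).
Qed.

Lemma dprod_inj_proj (x : X) (s : dprod S) :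
  dprod_inj x (dprod_proj x s) = dprod_inj x 1 * s.
Proof.
apply: functional_extensionality_dep => y; rewrite dprod_mulE /dprod_inj /=.
case: pselect => [exy|_]; last by rewrite mul0r.
by case: y / exy; rewrite /= mul1r.
Qed.

Local Notation factor_map_at x f :=
  (factor_map (@dprod_injK x) (dprod_inj_proj x) f : {rmorphism S x -> _}).

Lemma dprod_splits (T : comPzRingType) (f : {rmorphism dprod S -> T}) :
  (forall x, splits_as_module (factor_map_at x f)) -> splits_as_module f.
Proof.
move=> split_x.
have factor_mapE x (s : dprod S) : to_corner _ (f s) = factor_map_at x f (s x).
  exact: esym (factor_map_pi _ _ f s).
exists (fun y => (fun x => sval (cid (split_x x)) (to_corner _ y)) : dprod S).
split=> [y z | s y | s]; apply: functional_extensionality_dep => x;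
  have [sigmaD sigmaM sigmaK] := svalP (cid (split_x x)).
- by rewrite dprod_addE rmorphD sigmaD.
- by rewrite dprod_mulE -sigmaM -(factor_mapE x s) -rmorphM.
- by rewrite (factor_mapE x s) sigmaK.
Qed.

End DirectProduct.

Theorem lemma2p4 (X : Type) (S : X -> comPzRingType) :
  (forall x : X, splinter (S x)) -> splinter (dprod S).
Proof.
move=> splinterS T f finite_f presented_f surjective_f; apply: dprod_splits => x.
apply: splinterS.
- exact: finite_factor_map.
- exact: finitely_presented_factor_map.
- exact: spec_surjective_factor_map.
Qed.
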